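(* Let $A$ and $A'$ be pomset automata such that $A'$ weakly implements $A$. Then there exists a pomset automaton $A''$ implementing $A$. Furthermore, if $A'$ is $n$-forking (resp. flat-branching, parsimonious), then so is $A''$.
   Context: Fix a finite alphabet $\Sigma$. Pomsets are isomorphism classes of finite labelled posets over $\Sigma$; $1$ is the empty pomset; $\mathsf{SP}(\Sigma)$ is the smallest set containing $1$ and the one-element pomsets closed under sequential composition $\cdot$ and parallel composition $\parallel$. A pomset automaton (PA) is $A=\langle Q,F,\delta,\gamma\rangle$ with $F\subseteq Q$, $\delta:Q\times\Sigma\to2^Q$, $\gamma:Q\times\mathbb{M}(Q)\to2^Q$ ($\mathbb{M}(Q)$ finite multisets over $Q$, $|\phi|$ its size), each $q$ having finitely many $\phi$ with $\gamma(q,\phi)\ne\emptyset$; it is finite if $Q$ is finite. The run relation $\to_A$ is the smallest relation with: $q\xrightarrow{1}_A q$; $q\xrightarrow{a}_A q'$ if $q'\in\delta(q,a)$; $q\xrightarrow{U\cdot V}_A q'$ if $q\xrightarrow{U}_A q''\xrightarrow{V}_A q'$; $q\xrightarrow{U_1\parallel\cdots\parallel U_n}_A q'$ if $q'\in\gamma(q,\{\!|q_1,\dots,q_n|\!\})$ and each $q_i\xrightarrow{U_i}_A q_i'$ for some $q_i'\in F$. $L_A(q)=\{U\mid\exists q'\in F.\ q\xrightarrow{U}_A q'\}$. The support relation $\preceq_A$ is the smallest preorder on $Q$ with $q'\preceq_A q$ whenever $q'\in\delta(q,a)$, or $q'\in\gamma(q,\phi)$, or $q'\in\phi$ with $\gamma(q,\phi)\ne\emptyset$;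 $A$ is fork-acyclic if $r\in\phi$ and $\gamma(q,\phi)\ne\emptyset$ imply $q\not\preceq_A r$. $A'=\langle Q',F',\delta',\gamma'\rangle$ implements $A=\langle Q,F,\delta,\gamma\rangle$ if $Q\subseteq Q'$, $L_A(q)=L_{A'}(q)$ for every $q\in Q$, and if $A$ is fork-acyclic (resp. finite) then so is $A'$. $A'$ weakly implements $A$ if for every state $q$ of $A$ there is a finite set $Q_q$ of states of $A'$ with $L_A(q)=\bigcup_{x\in Q_q}L_{A'}(x)$, and if $A$ is fork-acyclic (resp. finite) then so is $A'$. $A$ is $n$-forking if $\gamma(q,\phi)\ne\emptyset$ implies $|\phi|\ge n$; parsimonious if $q\in\phi$ and $\gamma(p,\phi)\ne\emptyset$ imply $1\notin L_A(q)$; flat-branching if $\gamma(q,\phi)\ne\emptyset$ and $p\in\phi$ imply $\gamma(p,\psi)\cap F=\emptyset$ for all $\psi$. *)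

From mathcomp Require Import all_boot.
From Stdlib Require Import Sorting.Permutation Relations.Relation_Operators.

Set Implicit Arguments.
Unset Strict Implicit.
Unset Printing Implicit Defensive.

(* Labelled structures on a finite carrier 'I_n; pomsets are taken up  *)
(* to isomorphism (all notions below are isomorphism-invariant).       *)
Record lpo (S : Type) := LPo {
  lpo_n : nat;
  lpo_lab : 'I_lpo_n -> S;
  lpo_le : 'I_lpo_n -> 'I_lpo_n -> bool }.

Arguments LPo {S} lpo_n lpo_lab lpo_le.
Arguments lpo_n {S} l.
Arguments lpo_lab {S} l _.
Arguments lpo_le {S} l _ _.

Definition is_poset S (U : lpo S) : Prop :=
  (forall i, lpo_le U i i) /\
  (forall i j, lpo_le U i j -> lpo_le U j i -> i = j) /\
  (forall i j k, lpo_le U i j -> lpo_le U j k -> lpo_le U i k).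

Definition lpo_iso S (U V : lpo S) : Prop :=
  exists f : 'I_(lpo_n U) -> 'I_(lpo_n V),
    bijective f /\
    (forall i, lpo_lab V (f i) = lpo_lab U i) /\
    (forall i j, lpo_le V (f i) (f j) = lpo_le U i j).

Definition lpo_empty S : lpo S :=
  LPo 0 (fun i : 'I_0 => False_rect S (notF (eq_ind (i < 0) is_true (ltn_ord i) false (ltn0 i))))
        (fun _ _ => true).

Definition lpo_atom S (a : S) : lpo S :=
  LPo 1 (fun _ => a) (fun _ _ => true).

Definition lpo_seq S (U V : lpo S) : lpo S :=
  LPo (lpo_n U + lpo_n V)
    (fun i => match split i with inl i1 => lpo_lab U i1 | inr i2 => lpo_lab V i2 end)
    (fun i j => match split i, split j with
                | inl i1, inl j1 => lpo_le U i1 j1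
                | inr i2, inr j2 => lpo_le V i2 j2
                | inl _, inr _ => true
                | inr _, inl _ => false end).

Definition lpo_par S (U V : lpo S) : lpo S :=
  LPo (lpo_n U + lpo_n V)
    (fun i => match split i with inl i1 => lpo_lab U i1 | inr i2 => lpo_lab V i2 end)
    (fun i j => match split i, split j with
                | inl i1, inl j1 => lpo_le U i1 j1
                | inr i2, inr j2 => lpo_le V i2 j2
                | _, _ => false end).

(* Multisets over Q are lists taken up to permutation.                 *)
Record PA (S : Type) (Q : Type) := MkPA {
  pa_F : Q -> Prop;
  pa_delta : Q -> S -> Q -> Prop;
  pa_gamma : Q -> list Q -> Q -> Prop;
  pa_gamma_perm : forall q phi psi q',
      Permutation phi psi -> pa_gamma q phi q' -> pa_gamma q psi q';
  pa_gamma_fin : forall q, exists Phi : list (list Q),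
      forall phi, (exists q', pa_gamma q phi q') ->
        exists psi, List.In psi Phi /\ Permutation phi psi }.

Section PAdefs.
Variables (S : Type) (Q : Type) (A : PA S Q).

Inductive run : Q -> lpo S -> Q -> Prop :=
| run_unit q : run q (lpo_empty S) q
| run_atom q a q' : pa_delta A q a q' -> run q (lpo_atom a) q'
| run_seq q U q'' V q' : run q U q'' -> run q'' V q' -> run q (lpo_seq U V) q'
| run_fork q (k : nat) (qs : 'I_k -> Q) (Us : 'I_k -> lpo S) (fs : 'I_k -> Q) q' :
    pa_gamma A q (map qs (enum 'I_k)) q' ->
    (forall i, pa_F A (fs i)) ->
    (forall i, run (qs i) (Us i) (fs i)) ->
    run q (\big[@lpo_par S/lpo_empty S]_(i < k) Us i) q'
| run_iso q U V q' : run q U q' -> lpo_iso U V -> run q V q'.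

Definition lang (q : Q) (U : lpo S) : Prop := exists q', pa_F A q' /\ run q U q'.

Definition support_step (x y : Q) : Prop :=
  (exists a, pa_delta A y a x) \/
  (exists phi, pa_gamma A y phi x) \/
  (exists phi, List.In x phi /\ exists r, pa_gamma A y phi r).

Definition support : Q -> Q -> Prop := clos_refl_trans Q support_step.

Definition fork_acyclic : Prop :=
  forall q phi r, List.In r phi -> (exists p, pa_gamma A q phi p) -> ~ support q r.


Definition n_forking (n : nat) : Prop :=
  forall q phi q', pa_gamma A q phi q' -> n <= size phi.

Definition parsimonious : Prop :=
  forall p phi q, List.In q phi -> (exists r, pa_gamma A p phi r) ->
    ~ lang q (lpo_empty S).

Definition flat_branching : Prop :=
  forall q phi p, (exists r, pa_gamma A q phi r) -> List.In p phi ->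
    forall psi r, pa_gamma A p psi r -> ~ pa_F A r.

End PAdefs.

Definition pa_finite (S Q : Type) (A : PA S Q) : Prop :=
  exists s : list Q, forall q : Q, List.In q s.

Definition implements (S : Type) (Q Q' : Type) (A' : PA S Q') (A : PA S Q) : Prop :=
  exists iota : Q -> Q',
    (forall q1 q2, iota q1 = iota q2 -> q1 = q2) /\
    (forall q U, lang A q U <-> lang A' (iota q) U) /\
    (fork_acyclic A -> fork_acyclic A') /\
    (pa_finite A -> pa_finite A').

Definition weakly_implements (S : Type) (Q Q' : Type) (A' : PA S Q') (A : PA S Q) : Prop :=
  exists Qq : Q -> list Q',
    (forall q U, lang A q U <-> exists x, List.In x (Qq q) /\ lang A' x U) /\
    (fork_acyclic A -> fork_acyclic A') /\
    (pa_finite A -> pa_finite A').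

(* For every state q of A, add to A' a fresh state that behaves like the union
   of the states of Q_q: it has the outgoing transitions of each of them, and
   it is accepting iff one of them accepts the empty pomset.  No transition
   enters a fresh state, so a run from it is either empty or leaves it at its
   first step for some x in Q_q and then stays a run of A'.  Hence the fresh
   state accepts exactly the union of the L_{A'}(x), and every fork of the new
   automaton is a fork of A', which transfers fork-acyclicity, n-forking,
   flat branching and parsimony from A'. *)

From Pilot Require Import Defs.
From mathcomp Require Import all_boot.
From Stdlib Require Import Sorting.Permutation Relations.Relation_Operators.

Set Implicit Arguments.
Unset Strict Implicit.
Unset Printing Implicit Defensive.

Lemma mem_In (T : eqType) (x : T) (s : seq T) : x \in s -> List.In x s.
Proof. by elim: s => //= y s IHs; rewrite in_cons => /predU1P [->|/IHs]; auto. Qed.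

Lemma sum_inr_factor (T A B : Type) (f : T -> A + B) (b0 : B) :
  (forall t, exists b, f t = inr b) -> exists g : T -> B, f =1 inr \o g.
Proof.
move=> f_inr; exists (fun t => if f t is inr b then b else b0) => t /=.
by case: (f_inr t) => b ->.
Qed.

Lemma map_enum_inr (T : finType) (A B : Type) (f : T -> A + B) (l : seq B) (b0 : B) :
  map f (enum T) = map inr l -> exists g : T -> B, f =1 inr \o g /\ map g (enum T) = l.
Proof.
move=> Ef; have [g fg] : exists g : T -> B, f =1 inr \o g.
  apply: (sum_inr_factor b0) => t.
  have : List.In (f t) (map inr l).
    by rewrite -Ef; apply/List.in_map/mem_In; rewrite mem_enum.
  by case/List.in_map_iff=> b [Eb _]; exists b.
exists g; split=> //; apply: (inj_map (@inr_inj A B)).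
by rewrite -Ef -map_comp; apply: eq_map=> t; rewrite fg.
Qed.

Lemma lpo_iso_size (S : Type) (U V : lpo S) : lpo_iso U V -> lpo_n U = lpo_n V.
Proof. by case=> f [/bij_eq_card]; rewrite !card_ord. Qed.

Lemma lpo_iso_size0 (S : Type) (U V : lpo S) :
  lpo_n U = 0 -> lpo_n V = 0 -> lpo_iso U V.
Proof.
case: U V => n lab le [m lab' le'] /= En Em; subst n m.
by exists id; split; [exists id | split; case].
Qed.

Section PAFacts.
Variables (S Q : Type) (A : PA S Q).

Lemma run_size0 q U : lpo_n U = 0 -> run A q U q.
Proof.
by move=> U0; apply: run_iso (run_unit A q) (lpo_iso_size0 (U := lpo_empty S) erefl U0).
Qed.

Lemma lang_size0 q U V : lpo_n U = 0 -> lpo_n V = 0 -> lang A q U -> lang A q V.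
Proof.
by move=> U0 V0 [r [Fr R]]; exists r; split=> //; apply: run_iso R (lpo_iso_size0 U0 V0).
Qed.

Lemma pa_gamma_fin_seq (l : seq Q) : exists Phi : seq (seq Q),
  forall x phi, List.In x l -> (exists r, pa_gamma A x phi r) ->
    exists psi, List.In psi Phi /\ Permutation phi psi.
Proof.
elim: l => [|y l [Phi IHl]]; first by exists nil.
have [Phi_y Hy] := pa_gamma_fin A y.
exists (Phi_y ++ Phi) => x phi /= [<-|lx].
- by move/Hy=> [psi [? ?]]; exists psi; split=> //; apply: List.in_or_app; left.
- move/(IHl x phi lx)=> [psi [? ?]].
  by exists psi; split=> //; apply: List.in_or_app; right.
Qed.

End PAFacts.

Arguments run_size0 {S Q A q U}.
Arguments lang_size0 {S Q A q U V}.

Section Merge.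
Variables (S Q Q' : Type) (A' : PA S Q') (Qq : Q -> seq Q').

(* [inl q] is the fresh state merging [Qq q]; [inr x] is the copy of [x]. *)
Definition sources (s : Q + Q') : seq Q' :=
  match s with inl q => Qq q | inr x => [:: x] end.

Definition merge_final (s : Q + Q') : Prop :=
  match s with
  | inl q => exists2 x, List.In x (Qq q) & lang A' x (lpo_empty S)
  | inr x => pa_F A' x
  end.

Definition merge_delta (s : Q + Q') (a : S) (r : Q + Q') : Prop :=
  exists x y, List.In x (sources s) /\ r = inr y /\ pa_delta A' x a y.

Definition merge_gamma (s : Q + Q') (phi : seq (Q + Q')) (r : Q + Q') : Prop :=
  exists x phi' y,
    List.In x (sources s) /\ phi = map inr phi' /\ r = inr y /\ pa_gamma A' x phi' y.

Lemma merge_gamma_perm s phi psi r :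
  Permutation phi psi -> merge_gamma s phi r -> merge_gamma s psi r.
Proof.
move=> P [x [phi' [y [sx [Ephi [-> G]]]]]]; subst phi.
have [psi' [-> P']] := Permutation_map_inv _ _ (Permutation_sym P).
exists x, psi', y; do 3!split=> //.
exact: pa_gamma_perm P' G.
Qed.

Lemma merge_gamma_fin s : exists Phi : seq (seq (Q + Q')),
  forall phi, (exists r, merge_gamma s phi r) ->
    exists psi, List.In psi Phi /\ Permutation phi psi.
Proof.
have [Phi HPhi] := pa_gamma_fin_seq A' (sources s).
exists (map (map inr) Phi) => _ [_ [x [phi' [y [sx [-> [_ G]]]]]]].
have [psi [Phi_psi P]] := HPhi x phi' sx (ex_intro _ y G).
by exists (map inr psi); split; [apply: List.in_map | apply: Permutation_map].
Qed.

Definition merge_pa : PA S (Q + Q') :=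
  @MkPA S (Q + Q') merge_final merge_delta merge_gamma merge_gamma_perm merge_gamma_fin.

Lemma merge_delta_inr x a y : pa_delta A' x a y -> merge_delta (inr x) a (inr y).
Proof. by move=> D; exists x, y; split; [left | split]. Qed.

Lemma merge_gamma_inr x phi' y :
  pa_gamma A' x phi' y -> merge_gamma (inr x) (map inr phi') (inr y).
Proof. by move=> G; exists x, phi', y; split; [left | do 2!split]. Qed.

Lemma run_inr x U y : run A' x U y -> run merge_pa (inr x) U (inr y).
Proof.
elim=> {x U y} [q | q a q' D | q U q'' V q' _ R1 _ R2 | q k qs Us fs q' G F _ R
               | q U V q' _ R I].
- exact: run_unit.
- by apply/run_atom/merge_delta_inr.
- exact: run_seq R1 R2.
- apply: (run_fork (qs := inr \o qs) (fs := inr \o fs)) => //.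
  by rewrite map_comp; apply: merge_gamma_inr.
- exact: run_iso R I.
Qed.

Lemma run_from_inr x U r :
  run merge_pa (inr x) U r -> exists2 y, r = inr y & run A' x U y.
Proof.
move Es: (inr x) => s R; elim: R x Es
  => {s U r} [q | q a q' D | q U q'' V q' _ IH1 _ IH2 | q k qs Us fs q' G F _ IH
             | q U V q' _ IH I] x Es; subst.
- by exists x => //; apply: run_unit.
- case: D => _ [y [[<-|//] [-> D]]].
  by exists y => //; apply: run_atom.
- have [y Ey R1] := IH1 x erefl; have [z -> R2] := IH2 y (esym Ey).
  by exists z => //; apply: run_seq R1 R2.
- case: G => _ [phi' [y [[<-|//] [Eqs [-> G]]]]].
  have [qs' [Eqs' Ephi]] := map_enum_inr y Eqs; subst phi'.
  have [fs' Efs'] : exists fs' : 'I_k -> Q', fs =1 inr \o fs'.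
    apply: (sum_inr_factor y) => i.
    by have [z ? _] := IH i (qs' i) (esym (Eqs' i)); exists z.
  exists y => //; apply: (run_fork (fs := fs')) G _ _ => i.
  + by have := F i; rewrite Efs'.
  + by have [z] := IH i _ (esym (Eqs' i)); rewrite Efs' => -[->].
- have [y -> R] := IH x erefl.
  by exists y => //; apply: run_iso R I.
Qed.

Lemma run_merge_inv s U r : run merge_pa s U r ->
  (r = s /\ lpo_n U = 0) \/ exists2 x, List.In x (sources s) & run merge_pa (inr x) U r.
Proof.
elim=> {s U r} [s | s a r D | s U s' V r _ IH1 R2 IH2 | s k qs Us fs r G F R _
               | s U V r _ IH I].
- by left.
- case: D => x [y [sx [-> D]]].
  by right; exists x => //; apply/run_atom/merge_delta_inr.
- case: IH1 => [[Es U0] | [x sx R1]]; last by right; exists x => //; apply: run_seq R1 R2.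
  subst s'; case: IH2 => [[-> V0] | [x sx R2']].
  + by left; split=> //=; rewrite U0 V0.
  + by right; exists x => //; apply: run_seq (run_size0 U0) R2'.
- case: G => x [phi' [y [sx [Eqs [-> G]]]]].
  by right; exists x => //; apply: run_fork F R; rewrite Eqs; apply: merge_gamma_inr.
- case: IH => [[-> U0] | [x sx R]].
  + by left; split=> //; rewrite -(lpo_iso_size I).
  + by right; exists x => //; apply: run_iso R I.
Qed.

Lemma run_from_source s x U y : List.In x (sources s) -> run A' x U y ->
  run merge_pa s U (inr y) \/ (y = x /\ lpo_n U = 0).
Proof.
move=> sx R; elim: R s sx => {x U y} [x | x a y D | x U x' V y _ IH1 R2 IH2
                                     | x k qs Us fs y G F R _ | x U V y _ IH I] s sx.
- by right.
- by left; apply: run_atom; exists x, y.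
- case: (IH1 s sx) => [R1 | [Ex U0]]; first by left; apply: run_seq R1 (run_inr R2).
  subst x'; case: (IH2 s sx) => [R2' | [-> V0]].
  + by left; apply: run_seq (run_size0 U0) R2'.
  + by right; split=> //=; rewrite U0 V0.
- left; apply: (run_fork (qs := inr \o qs) (fs := inr \o fs)) => // [|i].
  + by exists x, (map qs (enum 'I_k)), y; rewrite map_comp.
  + exact: run_inr.
- case: (IH s sx) => [R | [-> U0]]; first by left; apply: run_iso R I.
  by right; split=> //; rewrite -(lpo_iso_size I).
Qed.

Lemma lang_merge_inr x U : lang merge_pa (inr x) U <-> lang A' x U.
Proof.
split=> [[r [Fr R]] | [y [Fy R]]].
- by have [y Ey R'] := run_from_inr R; subst r; exists y.
- by exists (inr y); split=> //; apply: run_inr.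
Qed.

Lemma lang_merge_inl q U :
  lang merge_pa (inl q) U <-> exists x, List.In x (Qq q) /\ lang A' x U.
Proof.
split=> [[r [Fr R]] | [x [qx [y [Fy R]]]]].
- case: (run_merge_inv R) => [[Er U0] | [x qx Rx]].
  + subst r; case: Fr => x qx L; exists x; split=> //.
    exact: (lang_size0 (U := lpo_empty S) erefl U0 L).
  + by exists x; split=> //; apply/lang_merge_inr; exists r.
- case: (run_from_source (s := inl q) qx R) => [R' | [Ey U0]]; first by exists (inr y).
  subst y; exists (inl q); split; last exact: run_size0 U0.
  by exists x => //; apply: (lang_size0 (V := lpo_empty S) U0 erefl); exists x.
Qed.

Lemma merge_support_inr a y :
  Defs.support merge_pa a (inr y) -> exists2 x, a = inr x & Defs.support A' x y.
Proof.
move Ey: (inr y) => b Sab; elim: Sab y Ey => {a b} [a b St | a | a b c _ IH1 _ IH2] y Ey;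
  subst.
- case: St => [[c [x [z [[<-|//] [-> D]]]]] | [[phi [x [phi' [z [[<-|//] [_ [-> G]]]]]]]
              | [phi [inphi [r [x [phi' [z [[<-|//] [Ephi [_ G]]]]]]]]]]].
  + by exists z => //; apply: rt_step; left; exists c.
  + by exists z => //; apply: rt_step; right; left; exists phi'.
  + subst phi; case/List.in_map_iff: inphi => w [<- wphi]; exists w => //.
    by apply: rt_step; right; right; exists phi'; split=> //; exists z.
- by exists y => //; apply: rt_refl.
- have [z Eb Szy] := IH2 y erefl; have [x -> Sxz] := IH1 z (esym Eb).
  by exists x => //; apply: rt_trans Sxz Szy.
Qed.

Lemma merge_fork_acyclic : fork_acyclic A' -> fork_acyclic merge_pa.
Proof.
move=> acyc s phi r inphi [p [x [phi' [y [sx [Ephi [_ G]]]]]]] Ssr; subst phi.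
case/List.in_map_iff: inphi => z [Er zphi]; subst r.
have [x' Es Sxz] := merge_support_inr Ssr; subst s.
case: sx => [Ex|//]; subst x'.
by apply: (acyc x phi' z zphi _ Sxz); exists y.
Qed.

Lemma merge_n_forking n : n_forking A' n -> n_forking merge_pa n.
Proof.
by move=> nf s phi r [x [phi' [y [_ [-> [_ G]]]]]]; rewrite size_map; apply: nf G.
Qed.

Lemma merge_flat_branching : flat_branching A' -> flat_branching merge_pa.
Proof.
move=> fb s phi p [r [x [phi' [y [_ [-> [_ G]]]]]]] /List.in_map_iff [z [<- zphi]].
move=> psi r' [x' [psi' [y' [[<-|//] [_ [-> G']]]]]] /=.
exact: fb x phi' z (ex_intro _ y G) zphi psi' y' G'.
Qed.

Lemma merge_parsimonious : parsimonious A' -> parsimonious merge_pa.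
Proof.
move=> ps s phi q qphi [r [x [phi' [y [_ [Ephi [_ G]]]]]]]; subst phi.
case/List.in_map_iff: qphi => z [<- zphi].
by rewrite lang_merge_inr; apply: (ps x phi' z zphi); exists y.
Qed.

Lemma merge_finite (A : PA S Q) : pa_finite A -> pa_finite A' -> pa_finite merge_pa.
Proof.
move=> [l Hl] [l' Hl']; exists (map inl l ++ map inr l') => -[q|x].
- by apply/List.in_or_app; left; apply: List.in_map.
- by apply/List.in_or_app; right; apply: List.in_map.
Qed.

End Merge.

Theorem lemma6p8 (Sigma : finType) (Q Q' : Type) (A : PA Sigma Q) (A' : PA Sigma Q') :
  weakly_implements A' A ->
  exists (Q'' : Type) (A'' : PA Sigma Q''),
    implements A'' A /\
    (forall n : nat, n_forking A' n -> n_forking A'' n) /\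
    (flat_branching A' -> flat_branching A'') /\
    (parsimonious A' -> parsimonious A'').
Proof.
move=> [Qq [lang_Qq [acyc fin]]].
exists (Q + Q')%type, (merge_pa A' Qq); split; last split; last split.
- exists inl; split; first by move=> q1 q2 [].
  split; first by move=> q U; rewrite lang_Qq lang_merge_inl.
  split=> [/acyc/merge_fork_acyclic // | finA].
  exact: merge_finite finA (fin finA).
- by move=> n; apply: merge_n_forking.
- exact: merge_flat_branching.
- exact: merge_parsimonious.
Qed.
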